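(* Let $(S,g)$ be a timed dynamical system. Then the unique timing map $\tau$ on $(S,g)$ is given by $\tau_s=\sup\{n\in\mathbb{N}: g^n(w)=s\text{ for some }w\in S\}$ (with value $\infty$ if the set is unbounded).
   Context: A dynamical system is a pair $(S,g)$ with $S$ a set and $g:S\to S$. A state $s$ is initial if $s\neq g(w)$ for every $w\in S$. A timing map is a map $\tau:S\to\mathbb{N}\cup\{\infty\}$ such that (a) $\tau_s=0$ for every initial state $s$, and (b) $\tau_{g(s)}=\tau_s+1$ for all $s$ (with $\infty+1=\infty$). The system is timed if a timing map exists. *)

From Stdlib Require Import Arith.

Inductive natinf : Type := Fin (n : nat) | Inf.

Definition succ_inf (x : natinf) : natinf :=
  match x with Fin n => Fin (S n) | Inf => Inf end.

Definition iter {S : Type} (g : S -> S) (n : nat) (w : S) : S := Nat.iter n g w.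

Definition initial {S : Type} (g : S -> S) (s : S) : Prop :=
  forall w : S, s <> g w.

Definition timing_map {S : Type} (g : S -> S) (tau : S -> natinf) : Prop :=
  (forall s, initial g s -> tau s = Fin 0) /\
  (forall s, tau (g s) = succ_inf (tau s)).

Definition timed {S : Type} (g : S -> S) : Prop :=
  exists tau, timing_map g tau.

Definition is_sup_natinf (A : nat -> Prop) (x : natinf) : Prop :=
  match x with
  | Fin n => A n /\ (forall m, A m -> m <= n)
  | Inf => forall n, exists m, A m /\ n < m
  end.

(* A timing map only grows along orbits, by one per step, so tau s bounds the
   length of every backward orbit of s.  Conversely a state with tau s <> 0 is
   not initial, hence has a preimage (classically), whose timing is one less,
   or again infinite; descending this way produces backward orbits of length
   tau s (of every length when tau s is infinite).  So tau s is the supremum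
   of the lengths of the backward orbits of s, which pins tau down uniquely. *)
From Stdlib Require Import Lia FunctionalExtensionality Classical.

Lemma iter_succ_r {T : Type} (g : T -> T) (n : nat) (w : T) :
  iter g (S n) w = iter g n (g w).
Proof.
  unfold iter; induction n as [|n IH]; simpl in *; congruence.
Qed.

Lemma iter_succ_inf_Fin (n k : nat) :
  Nat.iter n succ_inf (Fin k) = Fin (n + k).
Proof.
  induction n as [|n IH]; simpl; [reflexivity | now rewrite IH].
Qed.

Lemma iter_succ_inf_Inf (n : nat) : Nat.iter n succ_inf Inf = Inf.
Proof.
  induction n as [|n IH]; simpl; [reflexivity | now rewrite IH].
Qed.

Lemma is_sup_natinf_unique (A : nat -> Prop) (x y : natinf) :
  is_sup_natinf A x -> is_sup_natinf A y -> x = y.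
Proof.
  destruct x as [n|], y as [m|]; simpl.
  - intros [An Hn] [Am Hm]. f_equal. specialize (Hn m Am). specialize (Hm n An). lia.
  - intros [_ Hn] Hy. destruct (Hy n) as [k [Ak Hk]]. specialize (Hn k Ak). lia.
  - intros Hx [_ Hm]. destruct (Hx m) as [k [Ak Hk]]. specialize (Hm k Ak). lia.
  - reflexivity.
Qed.

Section TimingMap.

Variables (T : Type) (g : T -> T) (tau : T -> natinf).
Hypothesis Htau : timing_map g tau.

Lemma timing_map_iter (n : nat) (w : T) :
  tau (iter g n w) = Nat.iter n succ_inf (tau w).
Proof.
  destruct Htau as [_ Hsucc].
  induction n as [|n IH]; simpl; [reflexivity | now rewrite Hsucc, IH].
Qed.

Lemma timing_map_preimage (s : T) : tau s <> Fin 0 -> exists w, s = g w.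
Proof.
  destruct Htau as [Hinit _]. intros Hs.
  apply NNPP; intros Hno. apply Hs, Hinit.
  intros w Hw. apply Hno. now exists w.
Qed.

Lemma timing_map_Fin_reachable (k : nat) (s : T) :
  tau s = Fin k -> exists w, iter g k w = s.
Proof.
  revert s; induction k as [|k IH]; intros s Hs.
  - now exists s.
  - destruct (timing_map_preimage s) as [v ->]; [now rewrite Hs|].
    destruct Htau as [_ Hsucc]. rewrite Hsucc in Hs.
    destruct (tau v) as [j|] eqn:Hv; simpl in Hs; [|discriminate].
    injection Hs as ->.
    destruct (IH v Hv) as [w Hw]. exists w. simpl. now rewrite <- Hw.
Qed.

Lemma timing_map_Fin_bound (k m : nat) (w s : T) :
  tau s = Fin k -> iter g m w = s -> m <= k.
Proof.
  intros Hs Hw.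
  pose proof (timing_map_iter m w) as Hiter. rewrite Hw, Hs in Hiter.
  destruct (tau w) as [j|].
  - rewrite iter_succ_inf_Fin in Hiter. injection Hiter. lia.
  - now rewrite iter_succ_inf_Inf in Hiter.
Qed.

Lemma timing_map_Inf_reachable (n : nat) (s : T) :
  tau s = Inf -> exists w, iter g n w = s /\ tau w = Inf.
Proof.
  intros Hs; induction n as [|n IH].
  - now exists s.
  - destruct IH as [v [Hv Hinf]].
    destruct (timing_map_preimage v) as [w ->]; [now rewrite Hinf|].
    exists w; split; [now rewrite iter_succ_r|].
    destruct Htau as [_ Hsucc]. rewrite Hsucc in Hinf.
    now destruct (tau w).
Qed.

Lemma timing_map_is_sup (s : T) :
  is_sup_natinf (fun n => exists w, iter g n w = s) (tau s).
Proof.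
  destruct (tau s) as [k|] eqn:Hs; simpl.
  - split; [exact (timing_map_Fin_reachable k s Hs)|].
    intros m [w Hw]. exact (timing_map_Fin_bound k m w s Hs Hw).
  - intros n. destruct (timing_map_Inf_reachable (S n) s Hs) as [w [Hw _]].
    exists (S n). split; [now exists w | lia].
Qed.

End TimingMap.

Theorem fact5p1 (S : Type) (g : S -> S) (Htimed : timed g) :
  (exists! tau : S -> natinf, timing_map g tau) /\
  (forall tau : S -> natinf, timing_map g tau ->
     forall s : S,
       is_sup_natinf (fun n => exists w : S, iter g n w = s) (tau s)).
Proof.
  split.
  - destruct Htimed as [tau Htau]. exists tau; split; [exact Htau|].
    intros tau' Htau'. apply functional_extensionality; intros s.
    exact (is_sup_natinf_unique _ _ _
             (timing_map_is_sup S g tau Htau s) (timing_map_is_sup S g tau' Htau' s)).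
  - exact (timing_map_is_sup S g).
Qed.
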